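(* Let $\varepsilon>0$ and let $H,K\colon(-\varepsilon;\varepsilon)\to\mathbb{R}$ be real analytic functions with $K(0)<0$. Then $4H(t)^2=-t^2K(t)$ for all $|t|<\varepsilon$ if and only if $H(0)=0$ and $$H^{(m)}=\pm\frac{-mK^{(m-1)}-\frac{4}{m+1}\sum_{r=2}^{m-1}\binom{m+1}{r}H^{(r)}H^{(m-r+1)}}{2^{2-\delta_{m1}}\sqrt{-K^{(0)}}}\qquad\text{for each }m=1,2,\dots,$$ where $H^{(i)}$ and $K^{(i)}$ denote the $i$-th derivatives at $t=0$ and the same choice of sign $\pm$ is used for all $m$.
   Context: $\delta_{mn}=1$ if $m=n$ and $0$ otherwise. An empty sum equals $0$. *)

From Stdlib Require Import Reals List.
From Coquelicot Require Import Coquelicot.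
Open Scope R_scope.

Definition analytic_on (eps : R) (f : R -> R) : Prop :=
  forall x0, Rabs x0 < eps ->
    exists (a : nat -> R) (r : R), 0 < r /\
      forall x, Rabs (x - x0) < r -> is_pseries a (x - x0) (f x).

Definition delta (m n : nat) : nat := if Nat.eqb m n then 1%nat else 0%nat.

(* sum_{r=a}^{b} F r ; empty (= 0) when b < a *)
Definition sum_from_to (a b : nat) (F : nat -> R) : R :=
  fold_right (fun r acc => F r + acc) 0 (List.seq a (S b - a)).

(* Write H(t) = sum h_n t^n / n! and K(t) = sum k_n t^n / n! near 0.  Comparing the
   coefficients of t^(m+1) in 4 H^2 = - t^2 K gives h_0 = 0, 4 h_1^2 = - k_0 (which fixes
   h_1 = s sqrt(-k_0) / 2 up to a sign s), and for m >= 2 an equation that is linear in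
   h_m with coefficient 8 (m+1) h_1 <> 0; solving it is the stated recurrence.  So near 0
   the identity is equivalent to the recurrence, and since 4 H^2 + t^2 K is analytic on
   the whole interval, vanishing near 0 propagates to (-eps, eps). *)

From Stdlib Require Import Reals List Lra Lia Factorial Classical.
From Coquelicot Require Import Coquelicot.
Open Scope R_scope.

Definition analytic_at (f : R -> R) (x0 : R) : Prop :=
  exists (a : nat -> R) (r : R), 0 < r /\
    forall x, Rabs (x - x0) < r -> is_pseries a (x - x0) (f x).

Lemma Rbar_lt_CV_radius (a : nat -> R) (r : R) :
  (forall y, Rabs y < r -> ex_pseries a y) ->
  forall y, Rabs y < r -> Rbar_lt (Rabs y) (CV_radius a).
Proof.
  intros Hconv y Hy.
  pose proof (Rabs_pos y).
  set (z := (Rabs y + r) / 2).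
  assert (Hz : Rabs z = z) by (apply Rabs_pos_eq; unfold z; lra).
  assert (Hlim : is_lim_seq (fun n => a n * z ^ n) 0).
  { destruct (Hconv z ltac:(rewrite Hz; unfold z; lra)) as [l Hl].
    apply is_lim_seq_ext with (fun n => scal (pow_n z n) (a n)).
    - intros n. rewrite pow_n_pow. apply Rmult_comm.
    - apply ex_series_lim_0. exists l. exact Hl. }
  assert (Hle : Rbar_le (Rabs z) (CV_radius a)).
  { apply Rbar_not_lt_le. intros Hout. exact (CV_disk_outside a z Hout Hlim). }
  apply Rbar_lt_le_trans with (Rabs z); [rewrite Hz; simpl; unfold z; lra | exact Hle].
Qed.

Lemma analytic_at_radius (f : R -> R) (a : nat -> R) (x0 r : R) :
  (forall x, Rabs (x - x0) < r -> is_pseries a (x - x0) (f x)) ->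
  forall y, Rabs y < r -> Rbar_lt (Rabs y) (CV_radius a).
Proof.
  intros Ha. apply Rbar_lt_CV_radius. intros y Hy. exists (f (y + x0)).
  pose proof (Ha (y + x0)) as Hy'. replace (y + x0 - x0) with y in Hy' by ring. exact (Hy' Hy).
Qed.

Lemma analytic_at_plus (f g : R -> R) (x0 : R) :
  analytic_at f x0 -> analytic_at g x0 -> analytic_at (fun x => f x + g x) x0.
Proof.
  intros [a [r1 [Hr1 Ha]]] [b [r2 [Hr2 Hb]]].
  exists (PS_plus a b), (Rmin r1 r2). split; [now apply Rmin_pos|].
  intros x Hx. pose proof (Rmin_l r1 r2). pose proof (Rmin_r r1 r2).
  apply (is_pseries_plus a b); [apply Ha | apply Hb]; lra.
Qed.

Lemma analytic_at_scal (c : R) (f : R -> R) (x0 : R) :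
  analytic_at f x0 -> analytic_at (fun x => c * f x) x0.
Proof.
  intros [a [r [Hr Ha]]]. exists (PS_scal c a), r. split; [exact Hr|].
  intros x Hx. apply (is_pseries_scal c a); [apply Rmult_comm | now apply Ha].
Qed.

Lemma analytic_at_mult (f g : R -> R) (x0 : R) :
  analytic_at f x0 -> analytic_at g x0 -> analytic_at (fun x => f x * g x) x0.
Proof.
  intros [a [r1 [Hr1 Ha]]] [b [r2 [Hr2 Hb]]].
  exists (PS_mult a b), (Rmin r1 r2). split; [now apply Rmin_pos|].
  intros x Hx. pose proof (Rmin_l r1 r2). pose proof (Rmin_r r1 r2).
  apply is_pseries_mult.
  - apply Ha; lra.
  - apply Hb; lra.
  - apply (analytic_at_radius f a x0 r1 Ha); lra.
  - apply (analytic_at_radius g b x0 r2 Hb); lra.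
Qed.

Lemma analytic_at_mul_id (f : R -> R) (x0 : R) :
  analytic_at f x0 -> analytic_at (fun x => x * f x) x0.
Proof.
  intros [a [r [Hr Ha]]].
  exists (PS_plus (PS_incr_1 a) (PS_scal x0 a)), r. split; [exact Hr|].
  intros x Hx. replace (x * f x) with ((x - x0) * f x + x0 * f x) by ring.
  apply (is_pseries_plus _ _ _ ((x - x0) * f x) (x0 * f x)).
  - exact (is_pseries_incr_1 a _ _ (Ha x Hx)).
  - apply (is_pseries_scal x0 a); [apply Rmult_comm | now apply Ha].
Qed.

Lemma analytic_at_comp_opp (f : R -> R) (x0 : R) :
  analytic_at f (- x0) -> analytic_at (fun x => f (- x)) x0.
Proof.
  intros [a [r [Hr Ha]]].
  exists (fun n => (-1) ^ n * a n), r. split; [exact Hr|].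
  intros x Hx.
  assert (Hx' : Rabs (- x - - x0) < r).
  { now replace (- x - - x0) with (- (x - x0)) by ring; rewrite Rabs_Ropp. }
  apply is_series_ext with (2 := Ha _ Hx'). intros n.
  rewrite !pow_n_pow. unfold scal; simpl. unfold mult; simpl.
  replace (- x - - x0) with ((-1) * (x - x0)) by ring.
  rewrite Rpow_mult_distr.
  replace (@pow_n (AbsRing.Ring R_AbsRing) (x - x0) n) with ((x - x0) ^ n)
    by (symmetry; apply pow_n_pow).
  ring.
Qed.

Lemma continuity_pt_zero_of_left (g : R -> R) (d : R) : 0 < d ->
  continuity_pt g 0 -> (forall y, - d < y < 0 -> g y = 0) -> g 0 = 0.
Proof.
  intros Hd Hc Hz. destruct (Req_dec (g 0) 0) as [E|E]; [exact E|]. exfalso.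
  destruct (Hc (Rabs (g 0)) (Rabs_pos_lt _ E)) as [alp [Halp Hclose]].
  pose proof (Rmin_l alp d). pose proof (Rmin_r alp d).
  pose proof (Rmin_pos alp d Halp Hd).
  set (y := - Rmin alp d / 2).
  assert (Hy : - d < y < 0) by (unfold y; lra).
  assert (Hyalp : dist R_met y 0 < alp).
  { simpl. unfold R_dist, y. rewrite Rminus_0_r, Rabs_left; lra. }
  specialize (Hclose y (conj (conj I (Rgt_not_eq _ _ (proj2 Hy))) Hyalp)).
  simpl in Hclose. unfold R_dist in Hclose.
  rewrite (Hz y Hy), Rminus_0_l, Rabs_Ropp in Hclose. lra.
Qed.

Lemma analytic_at_zero_of_zero_left (F : R -> R) (x0 d : R) :
  analytic_at F x0 -> 0 < d -> (forall x, x0 - d < x < x0 -> F x = 0) ->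
  exists rho, 0 < rho /\ forall x, Rabs (x - x0) < rho -> F x = 0.
Proof.
  intros [a [r [Hr Ha]]] Hd Hz.
  pose proof (analytic_at_radius F a x0 r Ha) as Hrad.
  assert (HF : forall y, Rabs y < r -> F (y + x0) = PSeries a y).
  { intros y Hy. symmetry. apply is_pseries_unique.
    pose proof (Ha (y + x0)) as Hy'. replace (y + x0 - x0) with y in Hy' by ring. exact (Hy' Hy). }
  assert (Hrad0 : Rbar_lt 0 (CV_radius a)) by (rewrite <- Rabs_R0; apply Hrad; rewrite Rabs_R0; lra).
  pose proof (Rmin_l d r). pose proof (Rmin_r d r). pose proof (Rmin_pos d r Hd Hr).
  set (m := Rmin d r) in *.
  (* Every derivative of the sum vanishes on (-m, 0), hence at 0 by continuity. *)
  assert (Hcoef : forall n, a n = 0).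
  { intros n.
    assert (Hg : PSeries (PS_derive_n n a) 0 = 0).
    { apply (continuity_pt_zero_of_left _ m); [lra| |].
      - apply PSeries_continuity. rewrite CV_radius_derive_n, Rabs_R0. exact Hrad0.
      - intros y Hy. rewrite <- Derive_n_PSeries by (apply Hrad; rewrite Rabs_left; lra).
        rewrite (Derive_n_ext_loc _ (fun _ => 0)).
        + destruct n; [reflexivity|]. apply Derive_n_const.
        + apply (locally_interval _ y (- m) 0); simpl; try lra.
          intros z Hz1 Hz2. rewrite <- HF by (rewrite Rabs_left; lra). apply Hz. lra. }
    rewrite <- Derive_n_PSeries, Derive_n_coef in Hg by (rewrite ?Rabs_R0; exact Hrad0).
    apply Rmult_integral in Hg. destruct Hg as [Hg|Hg]; [exact Hg|].
    exfalso. exact (INR_fact_neq_0 n Hg). }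
  exists r. split; [exact Hr|]. intros x Hx.
  replace x with ((x - x0) + x0) by ring. rewrite HF by exact Hx.
  rewrite (PSeries_ext a (fun _ => 0)) by exact Hcoef. apply PSeries_const_0.
Qed.

Lemma analytic_on_zero_right (F : R -> R) (eps r : R) :
  analytic_on eps F -> 0 < r -> (forall x, 0 <= x < r -> F x = 0) ->
  forall x, 0 <= x < eps -> F x = 0.
Proof.
  intros HF Hr Hz x Hx.
  pose proof (Rmin_l r eps). pose proof (Rmin_r r eps).
  pose proof (Rmin_pos r eps Hr ltac:(lra)).
  (* If the supremum T of the points up to which F vanishes were below eps,
     analyticity at T would let F vanish a little beyond T. *)
  set (E := fun t => t <= eps /\ forall s, 0 <= s < t -> F s = 0).
  assert (HE : E (Rmin r eps)).
  { split; [lra|]. intros s Hs. apply Hz. lra. }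
  destruct (completeness E) as [T [HTub HTlub]].
  { exists eps. intros t Ht. apply Ht. }
  { exists (Rmin r eps). exact HE. }
  pose proof (HTub _ HE).
  assert (Hbelow : forall s, 0 <= s < T -> F s = 0).
  { intros s Hs. destruct (classic (exists t, E t /\ s < t)) as [[t [[_ Ht] Hst]]|Hn].
    - apply Ht. lra.
    - enough (T <= s) by lra. apply HTlub. intros t Ht.
      apply Rnot_lt_le. intros Hst. apply Hn. now exists t. }
  assert (HT : eps <= T).
  { apply Rnot_lt_le. intros HT.
    destruct (analytic_at_zero_of_zero_left F T T) as [rho [Hrho Hnear]].
    - apply HF. rewrite Rabs_pos_eq; lra.
    - lra.
    - intros s Hs. apply Hbelow. lra.
    - pose proof (Rmin_l (T + rho / 2) eps). pose proof (Rmin_r (T + rho / 2) eps).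
      assert (Hbeyond : E (Rmin (T + rho / 2) eps)).
      { split; [lra|]. intros s Hs. destruct (Rlt_le_dec s T); [apply Hbelow; lra|].
        apply Hnear. rewrite Rabs_pos_eq; lra. }
      pose proof (HTub _ Hbeyond).
      assert (T < Rmin (T + rho / 2) eps) by (apply Rmin_glb_lt; lra). lra. }
  apply Hbelow. lra.
Qed.

Lemma analytic_on_locally_zero (F : R -> R) (eps r : R) :
  analytic_on eps F -> 0 < r -> (forall x, Rabs x < r -> F x = 0) ->
  forall x, Rabs x < eps -> F x = 0.
Proof.
  intros HF Hr Hz x Hx.
  destruct (Rle_lt_dec 0 x) as [Hpos|Hneg].
  - apply (analytic_on_zero_right F eps r HF Hr); [|rewrite Rabs_pos_eq in Hx; lra].
    intros y Hy. apply Hz. rewrite Rabs_pos_eq; lra.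
  - replace x with (- - x) by ring.
    apply (analytic_on_zero_right (fun y => F (- y)) eps r);
      [| exact Hr | | rewrite Rabs_left in Hx; lra].
    + intros y Hy. apply analytic_at_comp_opp, HF. now rewrite Rabs_Ropp.
    + intros y Hy. apply Hz. rewrite Rabs_Ropp, Rabs_pos_eq; lra.
Qed.

Definition taylor_coef (h : nat -> R) (n : nat) : R := h n / INR (fact n).

Lemma analytic_on_taylor_pseries (f : R -> R) (eps : R) :
  0 < eps -> analytic_on eps f ->
  exists r, 0 < r <= eps /\
    forall x, Rabs x < r -> is_pseries (taylor_coef (fun n => Derive_n f n 0)) x (f x).
Proof.
  intros Heps Hf. destruct (Hf 0) as [a [r [Hr Ha]]]; [rewrite Rabs_R0; lra|].
  assert (Ha0 : forall x, Rabs x < r -> is_pseries a x (f x)).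
  { intros x Hx. pose proof (Ha x) as Hx'. rewrite Rminus_0_r in Hx'. exact (Hx' Hx). }
  assert (Hrad : Rbar_lt 0 (CV_radius a)).
  { rewrite <- Rabs_R0. apply (analytic_at_radius f a 0 r Ha). rewrite Rabs_R0. lra. }
  assert (Hcoef : forall n, a n = taylor_coef (fun n => Derive_n f n 0) n).
  { intros n. unfold taylor_coef.
    rewrite (Derive_n_ext_loc f (PSeries a)).
    - rewrite Derive_n_coef by exact Hrad. field. apply INR_fact_neq_0.
    - exists (mkposreal r Hr). intros y Hy.
      change (Rabs (y - 0) < r) in Hy. rewrite Rminus_0_r in Hy.
      symmetry. apply is_pseries_unique, Ha0, Hy. }
  exists (Rmin r eps). split; [split; [now apply Rmin_pos | apply Rmin_r]|].
  intros x Hx. apply is_pseries_ext with a; [exact Hcoef|].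
  apply Ha0. pose proof (Rmin_l r eps). lra.
Qed.

Lemma pseries_sq_identity_iff (H K : R -> R) (a b : nat -> R) (r : R) : 0 < r ->
  (forall x, Rabs x < r -> is_pseries a x (H x)) ->
  (forall x, Rabs x < r -> is_pseries b x (K x)) ->
  (forall x, Rabs x < r -> 4 * H x ^ 2 = - x ^ 2 * K x) <->
  (forall n, 4 * PS_mult a a n = - PS_incr_n b 2 n).
Proof.
  intros Hr Ha Hb.
  assert (Hrad : forall c g, (forall x, Rabs x < r -> is_pseries c x (g x)) ->
                 forall x, Rabs x < r -> Rbar_lt (Rabs x) (CV_radius c)).
  { intros c g Hc. apply Rbar_lt_CV_radius. intros x Hx. exists (g x). now apply Hc. }
  set (L := PS_scal 4 (PS_mult a a)).
  set (M := PS_opp (PS_incr_n b 2)).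
  assert (HL : forall x, Rabs x < r -> is_pseries L x (4 * H x ^ 2)).
  { intros x Hx.
    assert (Hsq : is_pseries (PS_mult a a) x (H x * H x))
      by (apply is_pseries_mult; try apply Ha; try apply (Hrad a H Ha); exact Hx).
    replace (4 * H x ^ 2) with (4 * (H x * H x)) by ring.
    exact (is_pseries_scal 4 _ x _ (Rmult_comm _ _) Hsq). }
  assert (HM : forall x, Rabs x < r -> is_pseries M x (- x ^ 2 * K x)).
  { intros x Hx. replace (- x ^ 2 * K x) with (opp (scal (pow_n x 2) (K x)))
      by (rewrite pow_n_pow; unfold opp, scal; simpl; unfold mult; simpl; ring).
    exact (is_pseries_opp _ _ _ (is_pseries_incr_n b 2 x _ (Hb x Hx))). }
  assert (Hr0 : Rabs 0 < r) by (rewrite Rabs_R0; exact Hr).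
  split.
  - intros Hid n. apply (PSeries_ext_recip L M n).
    + rewrite <- Rabs_R0. exact (Hrad L _ HL 0 Hr0).
    + rewrite <- Rabs_R0. exact (Hrad M _ HM 0 Hr0).
    + exists (mkposreal r Hr). intros y Hy.
      change (Rabs (y - 0) < r) in Hy. rewrite Rminus_0_r in Hy.
      rewrite (is_pseries_unique _ _ _ (HL y Hy)), (is_pseries_unique _ _ _ (HM y Hy)).
      now apply Hid.
  - intros Hcoef x Hx.
    rewrite <- (is_pseries_unique _ _ _ (HL x Hx)), <- (is_pseries_unique _ _ _ (HM x Hx)).
    now apply PSeries_ext.
Qed.

Lemma sum_from_to_sum_n_m (a b : nat) (F : nat -> R) : sum_from_to a b F = sum_n_m F a b.
Proof.
  unfold sum_from_to, sum_n_m, Iter.iter_nat. generalize a, (S b - a)%nat.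
  intros i n. revert i. induction n as [|n IH]; intros i; simpl; [reflexivity|].
  now rewrite IH.
Qed.

Lemma PS_mult_taylor_coef (h g : nat -> R) (n : nat) :
  PS_mult (taylor_coef h) (taylor_coef g) n * INR (fact n)
  = sum_n_m (fun i => Binomial.C n i * h i * g (n - i)%nat) 0 n.
Proof.
  unfold PS_mult. rewrite <- sum_n_Reals. unfold sum_n.
  rewrite Rmult_comm.
  rewrite <- (sum_n_m_mult_l (K := R_Ring) (INR (fact n))). apply sum_n_m_ext_loc. intros i Hi.
  unfold Binomial.C, taylor_coef, mult; simpl.
  pose proof (INR_fact_neq_0 i). pose proof (INR_fact_neq_0 (n - i)). field. auto.
Qed.

Lemma binomial_C_S_1 (n : nat) : Binomial.C (S n) 1 = INR (S n).
Proof.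
  unfold Binomial.C. replace (S n - 1)%nat with n by lia.
  change (fact (S n)) with (S n * fact n)%nat. rewrite mult_INR.
  simpl (fact 1). rewrite INR_1. field. apply INR_fact_neq_0.
Qed.

Lemma sum_binomial_sq_split (h : nat -> R) (m : nat) : (2 <= m)%nat -> h 0%nat = 0 ->
  sum_n_m (fun i => Binomial.C (m + 1) i * h i * h (m + 1 - i)%nat) 0 (m + 1)
  = 2 * INR (m + 1) * h 1%nat * h m
    + sum_n_m (fun i => Binomial.C (m + 1) i * h i * h (m - i + 1)%nat) 2 (m - 1).
Proof.
  intros Hm H0. destruct m as [|[|p]]; [lia|lia|].
  replace (S (S p) + 1)%nat with (S (S (S p))) by lia.
  rewrite sum_Sn_m, sum_Sn_m, sum_n_Sm, sum_n_Sm by lia.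
  replace (S (S p) - 1)%nat with (S p) by lia.
  rewrite (sum_n_m_ext_loc _ (fun i => Binomial.C (S (S (S p))) i * h i * h (S (S p) - i + 1)%nat))
    by (intros i Hi; do 2 f_equal; lia).
  rewrite (pascal_step1 (S (S (S p))) (S (S p))) by lia.
  replace (S (S (S p)) - S (S p))%nat with 1%nat by lia.
  replace (S (S (S p)) - 1)%nat with (S (S p)) by lia.
  rewrite Nat.sub_diag, Nat.sub_0_r, H0, binomial_C_S_1.
  unfold plus; cbn -[INR Binomial.C sum_n_m]. ring.
Qed.

Lemma recurrence_step_solve (s sq M k' c hm : R) : s * s = 1 -> 0 < sq -> 0 < M ->
  4 * (2 * (M + 1) * (s * sq / 2) * hm + c) = - (M + 1) * M * k' <->
  hm = s * ((- M * k' - 4 / (M + 1) * c) / (2 ^ 2 * sq)).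
Proof.
  intros Hss Hsq HM.
  assert (Hlin : 4 * (2 * (M + 1) * (s * sq / 2) * hm + c) = - (M + 1) * M * k' <->
                 s * hm = (- M * k' - 4 / (M + 1) * c) / (2 ^ 2 * sq)).
  { split; intros E; [field_simplify_eq; [|lra..]; lra|].
    field_simplify_eq in E; [|lra..]. lra. }
  rewrite Hlin. split; intros E.
  - rewrite <- E, <- Rmult_assoc, Hss. ring.
  - rewrite E, <- Rmult_assoc, Hss. ring.
Qed.

Definition derivative_recurrence (h k : nat -> R) (s : R) (m : nat) : Prop :=
  h m = s * ((- INR m * k (m - 1)%nat
             - 4 / INR (m + 1) *
               sum_from_to 2 (m - 1) (fun r => Binomial.C (m + 1) r * h r * h (m - r + 1)%nat))
            / (2 ^ (2 - delta m 1) * sqrt (- k 0%nat))).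

Lemma derivative_recurrence_1 (h k : nat -> R) (s : R) : k 0%nat < 0 ->
  derivative_recurrence h k s 1 <-> h 1%nat = s * sqrt (- k 0%nat) / 2.
Proof.
  intros Hk. unfold derivative_recurrence.
  change (sum_from_to 2 (1 - 1) _) with 0. change (delta 1 1) with 1%nat.
  assert (Hsq : 0 < sqrt (- k 0%nat)) by (apply sqrt_lt_R0; lra).
  replace (- INR 1 * k (1 - 1)%nat) with (sqrt (- k 0%nat) * sqrt (- k 0%nat))
    by (rewrite sqrt_sqrt by lra; simpl; ring).
  replace (s * ((sqrt (- k 0%nat) * sqrt (- k 0%nat) - 4 / INR (1 + 1) * 0)
                / (2 ^ (2 - 1) * sqrt (- k 0%nat))))
    with (s * sqrt (- k 0%nat) / 2) by (simpl; field; lra).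
  reflexivity.
Qed.

Lemma derivative_recurrence_succ (h k : nat -> R) (s : R) (m : nat) :
  (2 <= m)%nat -> h 0%nat = 0 -> s * s = 1 -> k 0%nat < 0 ->
  h 1%nat = s * sqrt (- k 0%nat) / 2 ->
  4 * PS_mult (taylor_coef h) (taylor_coef h) (S m) = - PS_incr_n (taylor_coef k) 2 (S m) <->
  derivative_recurrence h k s m.
Proof.
  intros Hm H0 Hss Hk Hh1. unfold derivative_recurrence.
  replace (delta m 1) with 0%nat by (unfold delta; destruct (Nat.eqb_spec m 1); lia).
  rewrite sum_from_to_sum_n_m.
  replace (S m) with (m + 1)%nat by lia.
  set (mid := sum_n_m _ 2 (m - 1)).
  assert (Hfact : INR (fact (m + 1)) = INR (m + 1) * INR m * INR (fact (m - 1))).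
  { destruct m as [|m]; [lia|].
    replace (S m + 1)%nat with (S (S m)) by lia. replace (S m - 1)%nat with m by lia.
    rewrite <- !mult_INR, <- Nat.mul_assoc. reflexivity. }
  assert (Hlhs : 4 * PS_mult (taylor_coef h) (taylor_coef h) (m + 1) * INR (fact (m + 1))
                 = 4 * (2 * INR (m + 1) * h 1%nat * h m + mid)).
  { rewrite Rmult_assoc, PS_mult_taylor_coef, sum_binomial_sq_split by assumption. reflexivity. }
  assert (Hrhs : - PS_incr_n (taylor_coef k) 2 (m + 1) * INR (fact (m + 1))
                 = - INR (m + 1) * INR m * k (m - 1)%nat).
  { rewrite PS_incr_n_simplify.
    destruct (Compare_dec.le_lt_dec 2 (m + 1)) as [_|Hlt]; [|lia].
    replace (m + 1 - 2)%nat with (m - 1)%nat by lia.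
    unfold taylor_coef. rewrite Hfact. field. apply INR_fact_neq_0. }
  transitivity (4 * (2 * INR (m + 1) * h 1%nat * h m + mid) = - INR (m + 1) * INR m * k (m - 1)%nat).
  - rewrite <- Hlhs, <- Hrhs. split; intros E; [now rewrite E|].
    apply Rmult_eq_reg_r with (2 := INR_fact_neq_0 (m + 1)), E.
  - rewrite plus_INR, INR_1, Hh1. apply recurrence_step_solve; [exact Hss | |].
    + apply sqrt_lt_R0. lra.
    + apply lt_0_INR. lia.
Qed.

Lemma sqrt_four_sqr_sign (x : R) : exists s, (s = 1 \/ s = -1) /\ x = s * sqrt (4 * (x * x)) / 2.
Proof.
  replace (4 * (x * x)) with (Rsqr (2 * x)) by (unfold Rsqr; ring).
  rewrite sqrt_Rsqr_abs, Rabs_mult, (Rabs_pos_eq 2) by lra.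
  destruct (Rle_or_lt 0 x) as [Hx|Hx].
  - exists 1. split; [now left|]. rewrite Rabs_pos_eq by lra. field.
  - exists (-1). split; [now right|]. rewrite Rabs_left by lra. field.
Qed.

Lemma taylor_sq_identity_iff_recurrence (h k : nat -> R) : k 0%nat < 0 ->
  (forall n, 4 * PS_mult (taylor_coef h) (taylor_coef h) n = - PS_incr_n (taylor_coef k) 2 n) <->
  (h 0%nat = 0 /\ exists s, (s = 1 \/ s = -1) /\
     forall m, (1 <= m)%nat -> derivative_recurrence h k s m).
Proof.
  intros Hk.
  assert (Hsq : sqrt (- k 0%nat) * sqrt (- k 0%nat) = - k 0%nat) by (apply sqrt_sqrt; lra).
  assert (Hcoef0 : 4 * PS_mult (taylor_coef h) (taylor_coef h) 0 = - PS_incr_n (taylor_coef k) 2 0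
                   <-> h 0%nat = 0).
  { unfold PS_mult, taylor_coef. simpl. unfold zero; simpl. split; intros E; [nra|]. rewrite E. field. }
  assert (Hcoef1 : h 0%nat = 0 ->
                   4 * PS_mult (taylor_coef h) (taylor_coef h) 1 = - PS_incr_n (taylor_coef k) 2 1).
  { intros H0. unfold PS_mult, taylor_coef. simpl. unfold zero; simpl. rewrite H0. field. }
  assert (Hcoef2 : h 0%nat = 0 ->
                   4 * PS_mult (taylor_coef h) (taylor_coef h) 2 = - PS_incr_n (taylor_coef k) 2 2
                   <-> 4 * (h 1%nat * h 1%nat) = - k 0%nat).
  { intros H0. unfold PS_mult, taylor_coef. simpl. rewrite H0.
    replace (4 * _) with (4 * (h 1%nat * h 1%nat)) by field.
    replace (- _) with (- k 0%nat) by field. reflexivity. }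
  split.
  - intros E. assert (H0 : h 0%nat = 0) by now apply Hcoef0.
    split; [exact H0|].
    destruct (sqrt_four_sqr_sign (h 1%nat)) as [s [Hs Hh1]].
    rewrite (proj1 (Hcoef2 H0) (E 2%nat)) in Hh1.
    exists s. split; [exact Hs|]. intros m Hm.
    destruct (Nat.eq_dec m 1) as [->|Hm1]; [now apply derivative_recurrence_1|].
    apply derivative_recurrence_succ;
      [lia | exact H0 | destruct Hs as [-> | ->]; ring | exact Hk | exact Hh1 | apply E].
  - intros [H0 [s [Hs Hrec]]] n.
    assert (Hss : s * s = 1) by (destruct Hs as [-> | ->]; ring).
    assert (Hh1 : h 1%nat = s * sqrt (- k 0%nat) / 2)
      by (apply derivative_recurrence_1, Hrec; [exact Hk | lia]).
    destruct n as [|[|[|j]]].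
    + now apply Hcoef0.
    + now apply Hcoef1.
    + apply Hcoef2; [exact H0|]. rewrite Hh1.
      replace (4 * _) with (s * s * (sqrt (- k 0%nat) * sqrt (- k 0%nat))) by field.
      rewrite Hss, Hsq. ring.
    + apply (derivative_recurrence_succ h k s (S (S j))); [lia | exact H0 | exact Hss | exact Hk | exact Hh1 |].
      apply Hrec. lia.
Qed.

Lemma sq_identity_extends (H K : R -> R) (eps r : R) :
  analytic_on eps H -> analytic_on eps K -> 0 < r ->
  (forall t, Rabs t < r -> 4 * H t ^ 2 = - t ^ 2 * K t) ->
  forall t, Rabs t < eps -> 4 * H t ^ 2 = - t ^ 2 * K t.
Proof.
  intros HH HK Hr Hnear t Ht.
  assert (Hdefect : analytic_on eps (fun x => 4 * (H x * H x) + x * (x * K x))).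
  { intros x0 Hx0. apply analytic_at_plus.
    - apply analytic_at_scal, analytic_at_mult; apply HH, Hx0.
    - apply analytic_at_mul_id, analytic_at_mul_id, HK, Hx0. }
  enough (4 * (H t * H t) + t * (t * K t) = 0) by nra.
  apply (analytic_on_locally_zero _ eps r Hdefect Hr); [|exact Ht].
  intros x Hx. pose proof (Hnear x Hx). nra.
Qed.

Theorem lemma1 (eps : R) (H K : R -> R)
  (heps : 0 < eps) (hH : analytic_on eps H) (hK : analytic_on eps K)
  (hK0 : K 0 < 0) :
  (forall t, Rabs t < eps -> 4 * (H t) ^ 2 = - t ^ 2 * K t) <->
  (H 0 = 0 /\
   exists s : R, (s = 1 \/ s = -1) /\
     forall m : nat, (1 <= m)%nat ->
       Derive_n H m 0 =
       s * ((- INR m * Derive_n K (m - 1) 0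
             - 4 / INR (m + 1) *
               sum_from_to 2 (m - 1)
                 (fun r => Binomial.C (m + 1) r * Derive_n H r 0
                           * Derive_n H (m - r + 1) 0))
            / (2 ^ (2 - delta m 1) * sqrt (- Derive_n K 0 0)))).
Proof.
  set (h := fun n => Derive_n H n 0). set (k := fun n => Derive_n K n 0).
  destruct (analytic_on_taylor_pseries H eps heps hH) as [r1 [[Hr1 Hr1eps] HHs]].
  destruct (analytic_on_taylor_pseries K eps heps hK) as [r2 [[Hr2 Hr2eps] HKs]].
  pose proof (Rmin_l r1 r2). pose proof (Rmin_r r1 r2).
  pose proof (Rmin_pos r1 r2 Hr1 Hr2) as Hr.
  assert (Hnear := pseries_sq_identity_iff H K (taylor_coef h) (taylor_coef k) (Rmin r1 r2) Hr
                     (fun x Hx => HHs x ltac:(lra)) (fun x Hx => HKs x ltac:(lra))).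
  assert (Hcoef := taylor_sq_identity_iff_recurrence h k hK0).
  split.
  - intros Hid. apply Hcoef, Hnear. intros t Ht. apply Hid. lra.
  - intros Hrec. apply (sq_identity_extends H K eps (Rmin r1 r2) hH hK Hr).
    apply Hnear, Hcoef, Hrec.
Qed.
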